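(* Let $k\ge 2$ and let $W\in\mathcal W^2_{5\times(3k+1)}$ be such that rows $W[2],W[3],W[4]$ each contain exactly $2k+1$ filled cells (i.e. $e(W[2])=e(W[3])=e(W[4])=1/3$). Then $e(W[1])\le -5/3$ or $e(W[5])\le -5/3$ (i.e. $W[1]$ or $W[5]$ contains at most $2k-1$ filled cells).
   Context: A 2-dimensional binary word of dimensions $h\times w$ is an $h\times w$ matrix with entries in $\{\square,\blacksquare\}$ (filled cells $\blacksquare$, empty cells $\square$); $|U|_\blacksquare$ is the number of filled cells of $U$. Two cells $(i,j),(i',j')$ are adjacent if $|i-i'|+|j-j'|=1$; the degree of a filled cell is the number of filled cells adjacent to it. $\mathcal W^2_{h\times w}$ is the set of $h\times w$ binary words in which every filled cell has degree at most $2$. $W[i]$ denotes row $i$ of $W$. The excess of an $a\times b$ word $U$ is $e(U)=|U|_\blacksquare-2ab/3$; for a row of length $3k+1$, $e=|\text{row}|_\blacksquare-2(3k+1)/3$. *)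

From mathcomp Require Import all_boot all_order all_algebra.
Set Implicit Arguments. Unset Strict Implicit. Unset Printing Implicit Defensive.
Import Order.TTheory GRing.Theory Num.Theory.

(* A 2-dimensional binary word of dimensions h x w: entry true = filled cell,
   false = empty cell.  Row i (0-based) of W is W i. *)
Definition bword (h w : nat) := 'I_h -> 'I_w -> bool.

Definition adjacent h w (c c' : 'I_h * 'I_w) : bool :=
  (`|(c.1 : nat) - (c'.1 : nat)| + `|(c.2 : nat) - (c'.2 : nat)|)%N == 1%N.

Definition degree h w (W : bword h w) (c : 'I_h * 'I_w) : nat :=
  #|[set c' : 'I_h * 'I_w | adjacent c c' && W c'.1 c'.2]|.

Definition inW2 h w (W : bword h w) : Prop :=
  forall c : 'I_h * 'I_w, W c.1 c.2 -> (degree W c <= 2)%N.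

Definition row_filled h w (W : bword h w) (i : 'I_h) : nat :=
  #|[set j : 'I_w | W i j]|.

Definition row_excess h w (W : bword h w) (i : 'I_h) : rat :=
  ((row_filled W i)%:R - 2%:R * w%:R / 3%:R)%R.

From mathcomp Require Import all_boot all_order all_algebra.
From mathcomp Require Import zify lra.
Import GRing.Theory Num.Theory.

(* Write T, A, B, C, D for the five rows. Counting, in a row X with neighbouring rows
   U and V, the filled cells, the adjacent empty pairs, the vertical empty pairs and
   the degrees shows that 4 e(X) + e(U) + e(V) is 2 (X_1 + X_n) - 2 minus a
   nonnegative defect. If the middle rows have excess 1/3 and the outer ones at least
   2k cells, every defect vanishes: A, B, C start filled and have no two adjacent
   empty cells, no cell of B has an empty cell above or below it, and every cell of
   B has degree exactly 2. Such a row B is 3-periodic, so up to mirroring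
   B = 1 0 1 1 0 1 1 ... 0 1 1. Then A and C are filled in all columns 3m+2 and
   exactly one of A 3, C 3 is filled; if it is A 3, then A saturates the first three
   cells of T, while every later block of three cells of T misses one, so T has at
   most 2k - 1 cells. *)

(* A row of length n is a predicate on nat supported in [1, n]: positions 0 and
   n.+1 serve as empty padding, so that neighbourhoods need no boundary cases.
   In row_deg, U and V are the rows above and below X. *)
Definition row_supp (n : nat) (X : nat -> bool) := forall j, X j -> 0 < j <= n.
Definition nfilled n (X : nat -> bool) := \sum_(1 <= j < n.+1) (X j : nat).
Definition nhfilled n (X : nat -> bool) := \sum_(1 <= j < n) ((X j && X j.+1) : nat).
Definition nhempty n (X : nat -> bool) := \sum_(1 <= j < n) ((~~ X j && ~~ X j.+1) : nat).
Definition nvfilled n (X Y : nat -> bool) := \sum_(1 <= j < n.+1) ((X j && Y j) : nat).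
Definition nvempty n (X Y : nat -> bool) := \sum_(1 <= j < n.+1) ((~~ X j && ~~ Y j) : nat).
Definition row_deg (X U V : nat -> bool) j : nat := X j.-1 + X j.+1 + U j + V j.
Definition max_deg2 (X U V : nat -> bool) := forall j, X j -> row_deg X U V j <= 2.
Definition slack n (X U V : nat -> bool) :=
  \sum_(1 <= j < n.+1) (X j * (2 - row_deg X U V j)).

Lemma max_deg2_swap {X U V} : max_deg2 X U V -> max_deg2 X V U.
Proof. by move=> hX j /hX; rewrite /row_deg addnAC. Qed.

Lemma sum_nat_eq0_in {m n} {F : nat -> nat} :
  \sum_(m <= j < n) F j = 0 -> forall j, m <= j < n -> F j = 0.
Proof.
move=> /eqP; rewrite sum_nat_seq_eq0 => /allP F0 j jmn.
by apply/eqP; apply: (implyP (F0 j _)); rewrite // mem_index_iota.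
Qed.

Lemma nhempty_count {n} (X : nat -> bool) : 0 < n ->
  2 * nfilled n X + nhempty n X = nhfilled n X + (n - 1) + X 1 + X n.
Proof.
move=> n_gt0; rewrite /nfilled /nhempty /nhfilled.
have sumR : \sum_(1 <= j < n.+1) (X j : nat) = \sum_(1 <= j < n) (X j : nat) + X n.
  by rewrite big_nat_recr.
have sumL : \sum_(1 <= j < n.+1) (X j : nat) = X 1 + \sum_(1 <= j < n) (X j.+1 : nat).
  by case: n n_gt0 {sumR} => // n' _; rewrite big_nat_recl.
have pairs : \sum_(1 <= j < n) ((X j : nat) + X j.+1 + (~~ X j && ~~ X j.+1)) =
             \sum_(1 <= j < n) (((X j && X j.+1) : nat) + 1).
  by apply: eq_bigr => j _; case: (X j); case: (X j.+1).
rewrite !big_split /= sum_nat_const_nat in pairs.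
lia.
Qed.

Lemma degree_sum {n X U V} : row_supp n X -> max_deg2 X U V ->
  2 * nhfilled n X + nvfilled n U X + nvfilled n X V + slack n X U V = 2 * nfilled n X.
Proof.
move=> suppX degX; rewrite /nfilled /slack /nvfilled /nhfilled.
have X0 : X 0 = false by apply/negP => /suppX.
have Xn1 : X n.+1 = false by apply/negP => /suppX; rewrite ltnn andbF.
clear suppX.
have right_pairs : \sum_(1 <= j < n.+1) ((X j : nat) * X j.+1) =
                   \sum_(1 <= j < n) ((X j && X j.+1) : nat).
  case: n Xn1 => [|n'] Xn1; first by rewrite !big_geq.
  rewrite big_nat_recr //= Xn1 muln0 addn0.
  by apply: eq_bigr => j _; case: (X j); case: (X j.+1).
have left_pairs : \sum_(1 <= j < n.+1) ((X j : nat) * X j.-1) =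
                  \sum_(1 <= j < n) ((X j && X j.+1) : nat).
  case: n Xn1 right_pairs => [|n'] _ _; first by rewrite !big_geq.
  rewrite big_nat_recl //= X0 muln0 add0n.
  by apply: eq_bigr => j _; case: (X j); case: (X j.+1).
have split_deg : \sum_(1 <= j < n.+1) ((X j : nat) * row_deg X U V j) =
   \sum_(1 <= j < n.+1) ((X j : nat) * X j.-1) + \sum_(1 <= j < n.+1) ((X j : nat) * X j.+1)
   + \sum_(1 <= j < n.+1) ((U j && X j) : nat) + \sum_(1 <= j < n.+1) ((X j && V j) : nat).
  rewrite -!big_split; apply: eq_bigr => j _ /=; rewrite /row_deg.
  by case: (X j); case: (U j); case: (V j); case: (X j.-1); case: (X j.+1).
have deg_slack :
    \sum_(1 <= j < n.+1) ((X j : nat) * row_deg X U V j + X j * (2 - row_deg X U V j)) =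
    \sum_(1 <= j < n.+1) (2 * X j).
  apply: eq_bigr => j _; case Xj: (X j) => //; have := degX j Xj; lia.
rewrite big_split /= -big_distrr /= in deg_slack.
lia.
Qed.

Lemma nvempty_count n X Y :
  nfilled n X + nfilled n Y + nvempty n X Y = nvfilled n X Y + n.
Proof.
rewrite /nfilled /nvempty /nvfilled.
have cells : \sum_(1 <= j < n.+1) ((X j : nat) + Y j + (~~ X j && ~~ Y j)) =
             \sum_(1 <= j < n.+1) (((X j && Y j) : nat) + 1).
  by apply: eq_bigr => j _; case: (X j); case: (Y j).
rewrite !big_split /= sum_nat_const_nat in cells.
lia.
Qed.

(* With e = nfilled - 2n/3 this reads
   4 e(X) + e(U) + e(V) + defects = 2 (X 1 + X n) - 2. *)
Lemma row_balance {n X U V} : 0 < n -> row_supp n X -> max_deg2 X U V ->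
  4 * nfilled n X + nfilled n U + nfilled n V + 2 * nhempty n X
    + nvempty n U X + nvempty n X V + slack n X U V + 2 = 4 * n + 2 * (X 1 + X n).
Proof.
move=> n_gt0 suppX degX.
have := nhempty_count X n_gt0; have := degree_sum suppX degX.
have := nvempty_count n U X; have := nvempty_count n X V; lia.
Qed.

Lemma tight_middle_row {k X U V} : row_supp (3 * k + 1) X -> max_deg2 X U V ->
  nfilled (3 * k + 1) U = 2 * k + 1 -> nfilled (3 * k + 1) X = 2 * k + 1 ->
  nfilled (3 * k + 1) V = 2 * k + 1 ->
  [/\ X 1, forall j, 1 <= j < 3 * k + 1 -> X j || X j.+1,
      forall j, 1 <= j <= 3 * k + 1 -> U j || X j,
      forall j, 1 <= j <= 3 * k + 1 -> X j || V j
    & forall j, X j -> row_deg X U V j = 2].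
Proof.
move=> suppX degX nfU nfX nfV.
have := row_balance (ltn_addl _ (ltnSn 0)) suppX degX; rewrite nfU nfX nfV.
case: (X 1); case: (X (3 * k + 1)) => //= bal; try lia.
have nh0 : nhempty (3 * k + 1) X = 0 by lia.
have nvU0 : nvempty (3 * k + 1) U X = 0 by lia.
have nvV0 : nvempty (3 * k + 1) X V = 0 by lia.
have sl0 : slack (3 * k + 1) X U V = 0 by lia.
split=> // [j jn | j jn | j jn | j Xj].
- by have := sum_nat_eq0_in nh0 j jn; case: (X j); case: (X j.+1).
- have /(sum_nat_eq0_in nvU0 j) : 1 <= j < (3 * k + 1).+1 by lia.
  by case: (U j); case: (X j).
- have /(sum_nat_eq0_in nvV0 j) : 1 <= j < (3 * k + 1).+1 by lia.
  by case: (X j); case: (V j).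
- have /(sum_nat_eq0_in sl0 j) : 1 <= j < (3 * k + 1).+1 by have := suppX j Xj; lia.
  rewrite Xj; have := degX j Xj; lia.
Qed.

Lemma tight_outer_row {k X U V} : row_supp (3 * k + 1) X -> max_deg2 X U V ->
  2 * k <= nfilled (3 * k + 1) U -> nfilled (3 * k + 1) X = 2 * k + 1 ->
  nfilled (3 * k + 1) V = 2 * k + 1 ->
  X 1 /\ forall j, 1 <= j < 3 * k + 1 -> X j || X j.+1.
Proof.
move=> suppX degX nfU nfX nfV.
have := row_balance (ltn_addl _ (ltnSn 0)) suppX degX; rewrite nfX nfV.
case: (X 1); case: (X (3 * k + 1)) => //= bal; try lia.
have nh0 : nhempty (3 * k + 1) X = 0 by lia.
split=> // j jn.
by have := sum_nat_eq0_in nh0 j jn; case: (X j); case: (X j.+1).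
Qed.

Lemma sum3 (X : nat -> bool) a : \sum_(a <= j < a + 3) (X j : nat) = X a + X a.+1 + X a.+2.
Proof. by rewrite /index_iota addKn !big_cons big_nil addn0 !addnA. Qed.

(* Each window 3m+1, 3m+2, 3m+3 of T has an empty cell, because T (3m+2) sees
   the filled cell A (3m+2); the first window is empty altogether, as A 1, A 2
   and A 3 are already saturated. *)
Lemma top_row_nfilled_lt {k T A B} : 0 < k -> max_deg2 T xpred0 A -> max_deg2 A T B ->
  A 1 -> A 3 -> B 1 -> B 3 -> (forall m, m < k -> A (3 * m + 2)) ->
  nfilled (3 * k + 1) T < 2 * k.
Proof.
move=> k_gt0 degT degA A1 A3 B1 B3 A_2mod3.
have A2 : A 2 by apply: (A_2mod3 0).
have first_window : \sum_(1 <= j < 1 + 3) (T j : nat) = 0.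
  have := degA 1 A1; have := degA 2 A2; have := degA 3 A3.
  rewrite sum3 /row_deg /= A1 A2 A3 B1 B3.
  by case: (T 1); case: (T 2); case: (T 3) => //=; lia.
have window m : m < k -> \sum_(3 * m + 1 <= j < 3 * m + 1 + 3) (T j : nat) <= 2.
  move=> mk; rewrite sum3; case T2: (T (3 * m + 1).+1); last by case: (T _); case: (T _).
  by have := degT _ T2; rewrite /row_deg addn0 /= -addnS A_2mod3 //; lia.
have prefix i : i < k -> \sum_(1 <= j < 3 * i + 1 + 3) (T j : nat) <= 2 * i.
  elim: i => [|i IH] ik; first by rewrite first_window.
  rewrite (@big_cat_nat _ _ _ (3 * i.+1 + 1)); [|lia|lia].
  rewrite (mulnSr 2); apply: leq_add; last exact: window.
  by rewrite (_ : 3 * i.+1 + 1 = 3 * i + 1 + 3); [exact/IH/ltnW | lia].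
case: k k_gt0 A_2mod3 window prefix => // k _ _ _ prefix.
rewrite /nfilled (_ : (3 * k.+1 + 1).+1 = (3 * k + 1 + 3).+1); last lia.
rewrite big_nat_recr /=; last lia.
by have := prefix k (ltnSn k); case: (T (3 * k + 1 + 3)); lia.
Qed.

Set Implicit Arguments.
Record counterexample k (T A B C D : nat -> bool) : Prop := Counterexample {
  cex_k_gt0 : 0 < k;
  cex_suppT : row_supp (3 * k + 1) T;
  cex_suppA : row_supp (3 * k + 1) A;
  cex_suppB : row_supp (3 * k + 1) B;
  cex_suppC : row_supp (3 * k + 1) C;
  cex_suppD : row_supp (3 * k + 1) D;
  cex_degT : max_deg2 T xpred0 A;
  cex_degA : max_deg2 A T B;
  cex_degB : max_deg2 B A C;
  cex_degC : max_deg2 C B D;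
  cex_degD : max_deg2 D C xpred0;
  cex_nfA : nfilled (3 * k + 1) A = 2 * k + 1;
  cex_nfB : nfilled (3 * k + 1) B = 2 * k + 1;
  cex_nfC : nfilled (3 * k + 1) C = 2 * k + 1;
  cex_nfT : 2 * k <= nfilled (3 * k + 1) T;
  cex_nfD : 2 * k <= nfilled (3 * k + 1) D }.
Unset Implicit Arguments.

Section CounterexampleRows.
Context {k : nat} {T A B C D : nat -> bool}.
Hypothesis cex : counterexample k T A B C D.

Let tightB := tight_middle_row (cex_suppB cex) (cex_degB cex)
                (cex_nfA cex) (cex_nfB cex) (cex_nfC cex).
Let tightA := tight_outer_row (cex_suppA cex) (cex_degA cex)
                (cex_nfT cex) (cex_nfA cex) (cex_nfB cex).
Let tightC := tight_outer_row (cex_suppC cex) (max_deg2_swap (cex_degC cex))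
                (cex_nfD cex) (cex_nfC cex) (cex_nfB cex).

Lemma B1_filled : B 1.
Proof. by have [] := tightB. Qed.

Lemma B_no_three j : 1 <= j -> j + 2 <= 3 * k + 1 -> ~~ [&& B j, B j.+1 & B j.+2].
Proof.
move=> j_ge1 j_le; apply/and3P => -[B0 B1 B2].
have [_ _ _ _ degB2] := tightB; have [_ pairA] := tightA; have [_ pairC] := tightC.
have := degB2 _ B0; have := degB2 _ B1; rewrite /row_deg /= B0 B1 B2.
have := pairA j; have := pairC j.
case: (A j); case: (A j.+1); case: (C j); case: (C j.+1) => /=; lia.
Qed.

Lemma B_no_isolated j : 1 <= j -> j + 2 <= 3 * k + 1 -> B j.+1 -> B j || B j.+2.
Proof.
move=> j_ge1 j_le B1; apply/negPn/negP; rewrite negb_or => /andP[/negPf B0 /negPf B2].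
have [_ _ vAB _ degB2] := tightB.
have := degB2 _ B1; have := vAB j; have := vAB j.+2; rewrite /row_deg /= B0 B2.
case: (A j.+1) (cex_degA cex j.+1); rewrite /row_deg /=;
  case: (A j); case: (A j.+2); case: (C j.+1) => /=; lia.
Qed.

Lemma B_period3 j : 1 <= j -> j + 3 <= 3 * k + 1 -> B (j + 3) = B j.
Proof.
move=> j_ge1 j_le; have [_ pairB _ _ _] := tightB.
have := pairB j; have := pairB j.+1; have := pairB j.+2.
have := B_no_three j; have := B_no_three j.+1.
have := B_no_isolated j; have := B_no_isolated j.+1.
rewrite addn3.
case: (B j); case: (B j.+1); case: (B j.+2); case: (B j.+3) => //=; lia.
Qed.

Lemma B_shift3 m j : 1 <= j -> j + 3 * m <= 3 * k + 1 -> B (j + 3 * m) = B j.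
Proof.
elim: m => [|m IH] j_ge1 j_le; first by rewrite addn0.
rewrite (_ : j + 3 * m.+1 = j + 3 * m + 3) ?B_period3 ?IH //; lia.
Qed.

(* Otherwise B = 1 0 1 1 0 1 1 ... 0 1 1, and B 3 leaves room for exactly one of
   A 3, C 3. *)
Lemma B2_filled : B 2.
Proof.
apply/negPn/negP => /negPf B2.
have [B1 pairB vAB vBC degB2] := tightB; have [A1 _] := tightA; have [C1 _] := tightC.
have k_gt0 := cex_k_gt0 cex.
have B3 : B 3 by have := pairB 2; rewrite B2; apply; lia.
have B4 : B 4 by rewrite -[4]/(1 + 3) B_period3 //; lia.
have B_2mod3 m : m < k -> B (3 * m + 2) = false.
  by move=> mk; rewrite addnC B_shift3 //; lia.
have A_2mod3 m : m < k -> A (3 * m + 2).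
  by move=> mk; have := vAB (3 * m + 2); rewrite B_2mod3 // orbF; apply; lia.
have C_2mod3 m : m < k -> C (3 * m + 2).
  by move=> mk; have := vBC (3 * m + 2); rewrite B_2mod3 //; apply; lia.
have := degB2 3 B3; rewrite /row_deg /= B2 B4; case A3: (A 3) => /= deg3.
- have := top_row_nfilled_lt k_gt0 (cex_degT cex) (cex_degA cex) A1 A3 B1 B3 A_2mod3.
  by have := cex_nfT cex; lia.
- have C3 : C 3 by case: (C 3) deg3.
  have := top_row_nfilled_lt k_gt0 (max_deg2_swap (cex_degD cex))
            (max_deg2_swap (cex_degC cex)) C1 C3 B1 B3 C_2mod3.
  by have := cex_nfD cex; lia.
Qed.

End CounterexampleRows.

Definition rev_row n (X : nat -> bool) j := X (n.+1 - j).

Lemma rev_row_supp n X : row_supp n X -> row_supp n (rev_row n X).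
Proof. by move=> suppX j /suppX; rewrite /rev_row; lia. Qed.

Lemma rev_row_max_deg2 n X U V : row_supp n X -> max_deg2 X U V ->
  max_deg2 (rev_row n X) (rev_row n U) (rev_row n V).
Proof.
move=> suppX degX j Xj; have j_in := suppX _ Xj.
have := degX _ Xj; rewrite /row_deg /rev_row.
have -> : n.+1 - j.-1 = (n.+1 - j).+1 by lia.
have -> : n.+1 - j.+1 = (n.+1 - j).-1 by lia.
lia.
Qed.

Lemma nfilled_rev_row n X : nfilled n (rev_row n X) = nfilled n X.
Proof.
rewrite /nfilled big_nat_rev /=; apply: eq_big_nat => j j_in.
by rewrite /rev_row; congr (nat_of_bool (X _)); lia.
Qed.

Lemma counterexample_rev {k T A B C D} : counterexample k T A B C D ->
  let r := rev_row (3 * k + 1) in counterexample k (r T) (r A) (r B) (r C) (r D).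
Proof.
case=> k_gt0 sT sA sB sC sD dT dA dB dC dD nfA nfB nfC nfT nfD.
split; rewrite ?nfilled_rev_row //; try exact: rev_row_supp.
- exact: rev_row_max_deg2 sT dT.
- exact: rev_row_max_deg2 sA dA.
- exact: rev_row_max_deg2 sB dB.
- exact: rev_row_max_deg2 sC dC.
- exact: rev_row_max_deg2 sD dD.
Qed.

Lemma no_counterexample {k T A B C D} : ~ counterexample k T A B C D.
Proof.
move=> cex; have k_gt0 := cex_k_gt0 cex.
(* In the mirrored word B 2 is B (3k) = B 3, so B 1, B 2, B 3 are all filled. *)
have := B2_filled (counterexample_rev cex); rewrite /rev_row.
rewrite (_ : (3 * k + 1).+1 - 2 = 3 + 3 * (k - 1)) ?(B_shift3 cex); try lia.
move=> B3; have /(B_no_three cex 1 (leqnn 1)) : 1 + 2 <= 3 * k + 1 by lia.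
by rewrite (B1_filled cex) (B2_filled cex) B3.
Qed.

(* Cell (i, j) of W for a 0-based row i and a 1-based column j, empty outside W. *)
Definition cell {h w} (W : bword h w) (i j : nat) : bool :=
  [exists x : 'I_h * 'I_w, [&& val x.1 == i, (val x.2).+1 == j & W x.1 x.2]].

Lemma cellE h w (W : bword h w) (r : 'I_h) (c : 'I_w) : cell W r c.+1 = W r c.
Proof.
rewrite /cell; apply/existsP/idP => [[[r' c'] /and3P[/= /eqP r'r /eqP[c'c] W']] | Wrc].
  by rewrite -(val_inj r'r) -(val_inj c'c).
by exists (r, c); rewrite !eqxx.
Qed.

Lemma cell_supp h w (W : bword h w) i : row_supp w (cell W i).
Proof. by move=> j /existsP[[r c] /and3P[_ /eqP<- _]]; exact: ltn_ord. Qed.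

Lemma cell_out {h w} (W : bword h w) i j : h <= i -> cell W i j = false.
Proof.
move=> hi; apply/existsP => -[[r c] /and3P[/eqP ri _ _]].
by have := ltn_ord r; rewrite ri ltnNge hi.
Qed.

Lemma count_mem_le_size (T : eqType) (s t : seq T) : uniq s -> count (mem t) s <= size t.
Proof.
move=> s_uniq; rewrite -size_filter uniq_leq_size ?filter_uniq // => x.
by rewrite mem_filter => /andP[].
Qed.

Lemma cell_deg_le2 {h w} {W : bword h w} {i j} : inW2 W -> cell W i j ->
  cell W i j.-1 + cell W i j.+1 + ((0 < i) && cell W i.-1 j) + cell W i.+1 j <= 2.
Proof.
move=> W2 /existsP[[r c] /and3P[/= /eqP ri /eqP cj Wrc]].
pose key (x : 'I_h * 'I_w) := (val x.1, (val x.2).+1).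
pose keys := map key (enum [set x | adjacent (r, c) x && W x.1 x.2]).
have near i' j' : cell W i' j' -> `|i - i'| + `|j - j'| = 1 -> (i', j') \in keys.
  move=> /existsP[[r' c'] /and3P[/= /eqP ri' /eqP cj' Wrc']] adj.
  apply/mapP; exists (r', c'); last by rewrite /key /= ri' cj'.
  by rewrite mem_enum inE /adjacent /= Wrc' andbT; apply/eqP; lia.
have mem_le p (b : bool) : (b -> p \in keys) -> b <= (p \in keys) by case: b => // ->.
apply: (@leq_trans (count (mem keys) [:: (i, j.-1); (i, j.+1); (i.-1, j); (i.+1, j)])).
  rewrite /= addn0 !addnA; repeat apply: leq_add; apply: mem_le.
  - by move=> /near; apply; lia.
  - by move=> /near; apply; lia.
  - by move=> /andP[i_gt0 /near]; apply; lia.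
  - by move=> /near; apply; lia.
apply: leq_trans (W2 (r, c) Wrc); rewrite /degree cardE -(size_map key).
apply: count_mem_le_size; rewrite /= !inE !xpair_eqE -cj /=.
by apply/and4P; split=> //; apply/negP; lia.
Qed.

Lemma nfilled_cell h w (W : bword h.+1 w) i : i <= h ->
  nfilled w (cell W i) = row_filled W (inord i).
Proof.
move=> ih; rewrite /nfilled /row_filled -sum1_card big_add1 big_mkord [RHS]big_mkcond.
by apply: eq_bigr => j _; rewrite inE -cellE inordK.
Qed.

Lemma counterexample_of_word {k} (W : bword 5 (3 * k + 1)) : 0 < k -> inW2 W ->
  2 * k <= row_filled W (inord 0) -> row_filled W (inord 1) = 2 * k + 1 ->
  row_filled W (inord 2) = 2 * k + 1 -> row_filled W (inord 3) = 2 * k + 1 ->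
  2 * k <= row_filled W (inord 4) ->
  counterexample k (cell W 0) (cell W 1) (cell W 2) (cell W 3) (cell W 4).
Proof.
move=> k_gt0 W2 nf0 nf1 nf2 nf3 nf4.
split; rewrite ?nfilled_cell //; try exact: cell_supp; try by move=> j; exact: cell_deg_le2.
by move=> j /(cell_deg_le2 W2); rewrite (cell_out W 5).
Qed.

Local Open Scope ring_scope.

Lemma row_excess_le h k (W : bword h (3 * k + 1)) i :
  (row_filled W i < 2 * k)%N -> row_excess W i <= - (5%:R / 3%:R).
Proof.
move=> lt_nf; have : (row_filled W i).+1%:R <= (2 * k)%N%:R :> rat by rewrite ler_nat.
by rewrite /row_excess -natr1 !natrD; lra.
Qed.

Theorem mainTheorem13 (k : nat) (hk : (2 <= k)%N) (W : bword 5 (3 * k + 1))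
  (hW : inW2 W)
  (h2 : row_filled W (inord 1) = (2 * k + 1)%N)
  (h3 : row_filled W (inord 2) = (2 * k + 1)%N)
  (h4 : row_filled W (inord 3) = (2 * k + 1)%N) :
  row_excess W (inord 0) <= - (5%:R / 3%:R) \/
  row_excess W (inord 4) <= - (5%:R / 3%:R).
Proof.
have [lt0|ge0] := ltnP (row_filled W (inord 0)) (2 * k); first by left; exact: row_excess_le.
have [lt4|ge4] := ltnP (row_filled W (inord 4)) (2 * k); first by right; exact: row_excess_le.
have k_gt0 : (0 < k)%N by apply: leq_trans hk.
by case: (no_counterexample (counterexample_of_word W k_gt0 hW ge0 h2 h3 h4 ge4)).
Qed.
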